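(* For every countable ordinal $\alpha$: $\mathfrak{D}_{\alpha+1} = \mathfrak{D}(\overline{\mathfrak{D}_\alpha})$, and more generally, for every countable ordinal $\alpha \geq 1$, $\mathfrak{D}_{\alpha} = \mathfrak{D}\left(\overline{\bigcup_{\lambda < \alpha} \mathfrak{D}_\lambda}\right)$.
   Context: All sets are subsets of Cantor space $\{0,1\}^\mathbb{N}$. For a countable ordinal $\alpha$, let $\mathrm{par}(\alpha)=0$ if $\alpha=\beta+2n$ for some limit ordinal $\beta$ (with $0$ counted as a limit) and some $n\in\mathbb{N}$, and $\mathrm{par}(\alpha)=1$ otherwise. The class $\mathfrak{D}_\alpha$ (level $\alpha$ of the Hausdorff difference hierarchy) consists of all sets $D$ for which there is a family $(U_\lambda)_{\lambda<\alpha}$ of open sets with: $x\in D \iff \mathrm{par}(\inf\{\beta \mid x\in U_\beta\})\neq \mathrm{par}(\alpha)$, where $\inf\emptyset=\alpha$. (So $\mathfrak{D}_0=\{\emptyset\}$, $\mathfrak{D}_1$ = open sets.) For a class $\Gamma$ of sets, $\overline{\Gamma}=\{U^C \mid U\in\Gamma\}$, and $\mathfrak{D}(\Gamma)$ is the class of all sets $\bigcup_{i\in I} v_iU_i$ where $I\subseteq\mathbb{N}$, each $v_i\in\{0,1\}^*$, each $U_i\in\Gamma$, the words $v_i$ are pairwise prefix-incomparable, and $vU=\{vp\mid p\in U\}$. *)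

From Stdlib Require Import Arith List.
Import ListNotations.
Set Implicit Arguments.

Definition Cantor := nat -> bool.

Definition open_set (U : Cantor -> Prop) : Prop :=
  forall x, U x -> exists n, forall y, (forall k, k < n -> y k = x k) -> U y.

Definition prepend (v : list bool) (p : Cantor) : Cantor :=
  fun n => if n <? length v then nth n v false else p (n - length v).

Definition is_prefix (u v : list bool) : Prop := exists w, v = u ++ w.

Definition prefix_incomparable (u v : list bool) : Prop :=
  ~ is_prefix u v /\ ~ is_prefix v u.

(** Countable ordinals are represented by countable well-orders (T, lt):
    the elements of T are the ordinals beta < alpha, alpha being the order type. *)
Definition countable_wellorder (T : Type) (lt : T -> T -> Prop) : Prop :=
  (forall a, ~ lt a a) /\
  (forall a b c, lt a b -> lt b c -> lt a c) /\
  (forall a b, lt a b \/ a = b \/ lt b a) /\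
  well_founded lt /\
  (exists f : T -> nat, forall a b, f a = f b -> a = b).

(** The ordinals <= alpha: option T, with None standing for alpha itself. *)
Definition ltopt (T : Type) (lt : T -> T -> Prop) (a b : option T) : Prop :=
  match a, b with
  | Some a', Some b' => lt a' b'
  | Some _, None => True
  | None, _ => False
  end.

Definition immpred (P : Type) (R : P -> P -> Prop) (a b : P) : Prop :=
  R a b /\ ~ (exists c, R a c /\ R c b).

Fixpoint stepsdown (P : Type) (R : P -> P -> Prop) (k : nat) (b c : P) : Prop :=
  match k with
  | 0 => c = b
  | S k' => exists d, immpred R d b /\ stepsdown R k' d c
  end.

(** par(b) = 0  iff  b = lambda + 2n with lambda limit or 0
    (lambda has no immediate predecessor). *)
Definition par_even (P : Type) (R : P -> P -> Prop) (b : P) : Prop :=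
  exists n c, stepsdown R (2 * n) b c /\ ~ (exists d, immpred R d c).

(** m = inf { beta | x in U_beta }, with inf of the empty set = alpha (None). *)
Definition is_inf (T : Type) (lt : T -> T -> Prop) (U : T -> Cantor -> Prop)
    (x : Cantor) (m : option T) : Prop :=
  match m with
  | Some b => U b x /\ forall c, U c x -> ~ lt c b
  | None => forall c, ~ U c x
  end.

Definition Dclass (T : Type) (lt : T -> T -> Prop) (D : Cantor -> Prop) : Prop :=
  exists U : T -> Cantor -> Prop,
    (forall t, open_set (U t)) /\
    forall x, D x <->
      exists m, is_inf lt U x m /\
        ~ (par_even (ltopt lt) m <-> par_even (ltopt lt) None).

Definition coclass (G : (Cantor -> Prop) -> Prop) (D : Cantor -> Prop) : Prop :=
  exists U, G U /\ forall x, D x <-> ~ U x.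

Definition Dgen (G : (Cantor -> Prop) -> Prop) (D : Cantor -> Prop) : Prop :=
  exists (I : nat -> Prop) (v : nat -> list bool) (U : nat -> Cantor -> Prop),
    (forall i, I i -> G (U i)) /\
    (forall i j, I i -> I j -> i <> j -> prefix_incomparable (v i) (v j)) /\
    forall x, D x <-> exists i p, I i /\ U i p /\ forall n, x n = prepend (v i) p n.

(** Initial segment {w | w < l}: the ordinal l < alpha. *)
Definition seg (T : Type) (lt : T -> T -> Prop) (l : T) : Type := { w : T | lt w l }.
Definition seglt (T : Type) (lt : T -> T -> Prop) (l : T) (a b : seg lt l) : Prop :=
  lt (proj1_sig a) (proj1_sig b).

(* A point x of a D_alpha set lies in some U_b, hence so does a whole cone wC around it;
   taking w minimal gives pairwise disjoint cones covering the set.  On a cone inside U_b the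
   infimum is at most b, so the coding family can be cut down to some lambda >= b (lambda = alpha
   for D_(alpha+1)) with par(lambda) <> par(alpha), which exhibits the set on that cone as the
   complement of a D_lambda set.  Conversely, complements of D_lambda sets placed on disjoint
   cones glue into one family indexed by alpha: keep each family and add the whole cone at
   lambda when par(lambda) <> par(alpha); otherwise shift it up by one ordinal first. *)

From Stdlib Require Import Arith List Lia PArith Wellfounded.
From Stdlib Require Import Classical FunctionalExtensionality ProofIrrelevance ClassicalEpsilon.
Import ListNotations.
Set Implicit Arguments.

Definition well_order (P : Type) (R : P -> P -> Prop) : Prop :=
  (forall a, ~ R a a) /\ (forall a b c, R a b -> R b c -> R a c) /\
  (forall a b, R a b \/ a = b \/ R b a) /\ well_founded R.

Definition limit_point (P : Type) (R : P -> P -> Prop) (c : P) : Prop :=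
  ~ exists d, immpred R d c.

Definition in_diff (P : Type) (R : P -> P -> Prop) (U : P -> Cantor -> Prop) (x : Cantor) : Prop :=
  exists m, is_inf R U x m /\ ~ (par_even (ltopt R) m <-> par_even (ltopt R) None).

Lemma well_order_of_countable T (lt : T -> T -> Prop) :
  countable_wellorder lt -> well_order lt.
Proof.
  intros (Hirr & Htrans & Htot & Hwf & _). exact (conj Hirr (conj Htrans (conj Htot Hwf))).
Qed.

Section WellOrder.
Variables (P : Type) (R : P -> P -> Prop).
Hypothesis HR : well_order R.

Lemma wo_irrefl a : ~ R a a.
Proof. exact (proj1 HR a). Qed.

Lemma wo_trans {a b c} : R a b -> R b c -> R a c.
Proof. exact (proj1 (proj2 HR) a b c). Qed.

Lemma wo_total a b : R a b \/ a = b \/ R b a.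
Proof. exact (proj1 (proj2 (proj2 HR)) a b). Qed.

Lemma wo_minimal (Q : P -> Prop) :
  (exists a, Q a) -> exists a, Q a /\ forall b, Q b -> ~ R b a.
Proof.
  intros [a Ha]. induction (proj2 (proj2 (proj2 HR)) a) as [a _ IH].
  destruct (classic (exists b, Q b /\ R b a)) as [(b & Hb & Hba)|Hmin].
  - exact (IH b Hba Hb).
  - exists a. split; [exact Ha|]. intros b Hb Hba. apply Hmin; eauto.
Qed.

Lemma immpred_unique {a a' b} : immpred R a b -> immpred R a' b -> a = a'.
Proof.
  intros [Hab Hnab] [Ha'b Hna'b].
  destruct (wo_total a a') as [h|[h|h]]; [| exact h |]; exfalso.
  - apply Hnab. eauto.
  - apply Hna'b. eauto.
Qed.

Lemma immpred_exists {a b} : R a b -> exists c, immpred R a c.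
Proof.
  intro Hab. destruct (wo_minimal (fun c => R a c) (ex_intro _ b Hab)) as (c & Hac & Hmin).
  exists c. split; [exact Hac|]. intros (d & Had & Hdc). exact (Hmin d Had Hdc).
Qed.

Lemma immpred_monotone {a t a' t'} :
  immpred R a t -> immpred R a' t' -> ~ R a' a -> ~ R t' t.
Proof.
  intros [Hat Hnat] [Ha't' Hna't'] Ha'a Ht't.
  destruct (wo_total a a') as [h|[<-|h]]; [|apply Hnat; eauto|contradiction].
  apply Hnat. exists a'. split; [exact h|]. eapply wo_trans; eauto.
Qed.

Lemma stepsdown_length_unique {k b c k' c'} :
  stepsdown R k b c -> stepsdown R k' b c' -> limit_point R c -> limit_point R c' -> k = k'.
Proof.
  revert b c k' c'. induction k as [|k IH]; intros b c [|k'] c' H H' Hc Hc'; simpl in *.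
  - reflexivity.
  - subst c. destruct H' as (d & Hd & _). exfalso; apply Hc; eauto.
  - subst c'. destruct H as (d & Hd & _). exfalso; apply Hc'; eauto.
  - destruct H as (d & Hd & H), H' as (d' & Hd' & H').
    rewrite <- (immpred_unique Hd Hd') in H'. f_equal. eauto.
Qed.

Lemma stepsdown_limit_exists b : exists k c, stepsdown R k b c /\ limit_point R c.
Proof.
  induction (proj2 (proj2 (proj2 HR)) b) as [b _ IH].
  destruct (classic (exists d, immpred R d b)) as [[d Hd]|Hlim].
  - destruct (IH d (proj1 Hd)) as (k & c & Hs & Hc).
    exists (S k), c. split; [exists d|]; auto.
  - exists 0, b. split; [reflexivity | exact Hlim].
Qed.

(* Every ordinal is (limit + k) for a unique k, and parity is the parity of k. *)
Lemma par_even_immpred a b : immpred R a b -> (par_even R b <-> ~ par_even R a).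
Proof.
  intro Hab. split.
  - intros (n & c & Hs & Hc) (m & c' & Hs' & Hc').
    destruct n as [|n].
    + simpl in Hs. subst c. apply Hc. eauto.
    + replace (2 * S n) with (S (2 * n + 1)) in Hs by lia.
      destruct Hs as (d & Hd & Hs). rewrite (immpred_unique Hd Hab) in Hs.
      pose proof (stepsdown_length_unique Hs Hs' Hc Hc'). lia.
  - intro Hodd. destruct (stepsdown_limit_exists a) as (k & c & Hs & Hc).
    destruct (Nat.Even_or_Odd k) as [[n ->]|[n ->]].
    + exfalso. apply Hodd. exists n, c. auto.
    + exists (S n), c. split; [|exact Hc].
      replace (2 * S n) with (S (2 * n + 1)) by lia. exists a. auto.
Qed.

Lemma is_inf_exists U x : exists m, is_inf R U x m.
Proof.
  destruct (classic (exists c, U c x)) as [Hx|Hx].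
  - destruct (wo_minimal (fun c => U c x) Hx) as (a & Ha & Hmin). exists (Some a). simpl; auto.
  - exists None. simpl. intros c Hc. apply Hx; eauto.
Qed.

Lemma is_inf_unique {U x m m'} : is_inf R U x m -> is_inf R U x m' -> m = m'.
Proof.
  destruct m as [a|], m' as [b|]; simpl.
  - intros [Ha Hma] [Hb Hmb]. destruct (wo_total a b) as [h|[->|h]].
    + exfalso; exact (Hmb a Ha h).
    + reflexivity.
    + exfalso; exact (Hma b Hb h).
  - intros [Ha _] H. exfalso; exact (H a Ha).
  - intros H [Hb _]. exfalso; exact (H b Hb).
  - reflexivity.
Qed.

Lemma in_diff_inf {U x m} : is_inf R U x m ->
  (in_diff R U x <-> ~ (par_even (ltopt R) m <-> par_even (ltopt R) None)).
Proof.
  intro Hm. split.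
  - intros (m' & Hm' & Hpar). rewrite (is_inf_unique Hm Hm'). exact Hpar.
  - intro Hpar. exists m. auto.
Qed.

Lemma in_diff_covered U x : in_diff R U x -> exists b, U b x.
Proof.
  intros ([b|] & Hm & Hpar); [exists b; apply Hm | exfalso; tauto].
Qed.

Lemma in_diff_ext (U U' : P -> Cantor -> Prop) x y :
  (forall t, U t x <-> U' t y) -> (in_diff R U x <-> in_diff R U' y).
Proof.
  intro HU. destruct (is_inf_exists U x) as [m Hm].
  assert (Hm' : is_inf R U' y m).
  { destruct m as [b|]; simpl in *.
    - destruct Hm as [Hb Hmin]. split; [apply HU, Hb|].
      intros c Hc. apply Hmin, HU, Hc.
    - intros c Hc. apply (Hm c), HU, Hc. }
  rewrite (in_diff_inf Hm), (in_diff_inf Hm'). reflexivity.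
Qed.

End WellOrder.

Section Embedding.
Variables (P Q : Type) (RP : P -> P -> Prop) (RQ : Q -> Q -> Prop) (g : P -> Q).
Hypothesis g_embed : forall a b, RP a b <-> RQ (g a) (g b).
Hypothesis g_downward : forall q b, RQ q (g b) -> exists a, q = g a.

Lemma immpred_embed a b : immpred RP a b <-> immpred RQ (g a) (g b).
Proof.
  unfold immpred. rewrite g_embed. split; intros [Hab Hn]; split; [exact Hab| |exact Hab|].
  - intros (c & Hac & Hcb). destruct (g_downward Hcb) as [c' ->].
    apply Hn. exists c'. rewrite !g_embed. auto.
  - intros (c & Hac & Hcb). apply Hn. exists (g c). rewrite <- !g_embed. auto.
Qed.

Lemma limit_point_embed c : limit_point RP c <-> limit_point RQ (g c).
Proof.
  unfold limit_point. split; intros Hlim [d Hd]; apply Hlim.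
  - destruct (g_downward (proj1 Hd)) as [d' ->]. exists d'. apply immpred_embed, Hd.
  - exists (g d). apply immpred_embed, Hd.
Qed.

Lemma stepsdown_embed {k b c} : stepsdown RP k b c -> stepsdown RQ k (g b) (g c).
Proof.
  revert b. induction k as [|k IH]; simpl; intros b H.
  - subst. reflexivity.
  - destruct H as (d & Hd & H). exists (g d). split; [apply immpred_embed, Hd | exact (IH d H)].
Qed.

Lemma stepsdown_embed_inv {k b q} :
  stepsdown RQ k (g b) q -> exists c, q = g c /\ stepsdown RP k b c.
Proof.
  revert b. induction k as [|k IH]; simpl; intros b H.
  - exists b. auto.
  - destruct H as (d & Hd & H). destruct (g_downward (proj1 Hd)) as [d' ->].
    destruct (IH d' H) as (c & -> & Hc). exists c. split; [reflexivity|].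
    exists d'. split; [apply immpred_embed, Hd | exact Hc].
Qed.

Lemma par_even_embed b : par_even RP b <-> par_even RQ (g b).
Proof.
  unfold par_even. split.
  - intros (n & c & Hs & Hc). exists n, (g c).
    split; [apply stepsdown_embed, Hs | apply limit_point_embed, Hc].
  - intros (n & q & Hs & Hq). destruct (stepsdown_embed_inv Hs) as (c & -> & Hc).
    exists n, c. split; [exact Hc | apply limit_point_embed, Hq].
Qed.

End Embedding.

Lemma well_order_ltopt P (R : P -> P -> Prop) : well_order R -> well_order (ltopt R).
Proof.
  intros (Hirr & Htrans & Htot & Hwf). split; [|split; [|split]].
  - intros [a|]; simpl; auto.
  - intros [a|] [b|] [c|]; simpl; try tauto. apply Htrans.
  - intros [a|] [b|]; simpl; auto.
    destruct (Htot a b) as [h|[->|h]]; auto.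
  - assert (HSome : forall a, Acc (ltopt R) (Some a)).
    { intro a. induction (Hwf a) as [a _ IH].
      constructor. intros [y|] Hy; simpl in Hy; [exact (IH y Hy) | contradiction]. }
    intros [a|]; [apply HSome|].
    constructor. intros [y|] Hy; simpl in Hy; [apply HSome | contradiction].
Qed.

Lemma well_order_seglt T (lt : T -> T -> Prop) l : well_order lt -> well_order (@seglt T lt l).
Proof.
  intros (Hirr & Htrans & Htot & Hwf). unfold seglt. split; [|split; [|split]].
  - intro a. apply Hirr.
  - intros a b c. apply Htrans.
  - intros [a Ha] [b Hb]; simpl. destruct (Htot a b) as [h|[->|h]]; auto.
    right; left. f_equal. apply proof_irrelevance.
  - exact (wf_inverse_image _ _ lt (@proj1_sig T _) Hwf).
Qed.

Lemma Some_downward P (R : P -> P -> Prop) q b : ltopt R q (Some b) -> exists a, q = Some a.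
Proof. destruct q as [a|]; simpl; [eauto | contradiction]. Qed.

Lemma par_even_Some P (R : P -> P -> Prop) b :
  par_even R b <-> par_even (ltopt R) (Some b).
Proof. apply (par_even_embed R (ltopt R)); [reflexivity | apply Some_downward]. Qed.

Lemma immpred_Some P (R : P -> P -> Prop) a b :
  immpred R a b <-> immpred (ltopt R) (Some a) (Some b).
Proof. apply (immpred_embed R (ltopt R)); [reflexivity | apply Some_downward]. Qed.

Lemma immpred_top_ltopt P (R : P -> P -> Prop) :
  immpred (ltopt (ltopt R)) (Some None) None.
Proof. split; [exact I|]. intros ([c|] & H1 & H2); simpl in *; contradiction. Qed.

Lemma par_even_ltopt_top P (R : P -> P -> Prop) : well_order R ->
  (par_even (ltopt (ltopt R)) None <-> ~ par_even (ltopt R) None).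
Proof.
  intro HR.
  rewrite (par_even_immpred (well_order_ltopt (well_order_ltopt HR)) (immpred_top_ltopt R)).
  rewrite <- par_even_Some. reflexivity.
Qed.

Definition shift (v : list bool) (x : Cantor) : Cantor := fun n => x (n + length v).

Lemma prepend_lt v p k : k < length v -> prepend v p k = nth k v false.
Proof. intro Hk. unfold prepend. apply Nat.ltb_lt in Hk. rewrite Hk. reflexivity. Qed.

Lemma prepend_ge v p k : length v <= k -> prepend v p k = p (k - length v).
Proof. intro Hk. unfold prepend. destruct (Nat.ltb_spec k (length v)); [lia | reflexivity]. Qed.

Lemma shift_prepend v p : shift v (prepend v p) = p.
Proof. extensionality n. unfold shift. rewrite prepend_ge by lia. f_equal. lia. Qed.

Lemma prepend_shift v x :
  (forall k, k < length v -> x k = nth k v false) -> prepend v (shift v x) = x.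
Proof.
  intro Hv. extensionality k. destruct (Nat.lt_ge_cases k (length v)).
  - rewrite prepend_lt by assumption. symmetry. auto.
  - rewrite prepend_ge by assumption. unfold shift. f_equal. lia.
Qed.

Lemma is_prefix_of_nth (v w : list bool) : length v <= length w ->
  (forall k, k < length v -> nth k v false = nth k w false) -> is_prefix v w.
Proof.
  intros Hlen Hnth. exists (skipn (length v) w).
  rewrite <- (firstn_skipn (length v) w) at 1. f_equal.
  apply nth_ext with false false; rewrite length_firstn; [lia|].
  intros k Hk. rewrite nth_firstn. destruct (Nat.ltb_spec k (length v)); [|lia].
  symmetry. apply Hnth. lia.
Qed.

Lemma prepend_incomparable v w p q :
  prefix_incomparable v w -> prepend v p <> prepend w q.
Proof.
  intros [Hvw Hwv] He.
  assert (Hnth : forall k, k < length v -> k < length w -> nth k v false = nth k w false).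
  { intros k Hv Hw. rewrite <- (prepend_lt v p Hv), <- (prepend_lt w q Hw), He. reflexivity. }
  destruct (Nat.le_ge_cases (length v) (length w)).
  - apply Hvw. apply is_prefix_of_nth; auto. intros k Hk. apply Hnth; lia.
  - apply Hwv. apply is_prefix_of_nth; auto. intros k Hk. symmetry. apply Hnth; lia.
Qed.

Lemma open_prepend U w : open_set U -> open_set (fun p => U (prepend w p)).
Proof.
  intros HU p Hp. destruct (HU _ Hp) as [n Hn]. exists n. intros y Hy. apply Hn.
  intros k Hk. destruct (Nat.lt_ge_cases k (length w)).
  - rewrite !prepend_lt by assumption. reflexivity.
  - rewrite !prepend_ge by assumption. apply Hy. lia.
Qed.

Section Glue.
Variables (Q : Type) (I : nat -> Prop) (v : nat -> list bool) (F : nat -> Q -> Cantor -> Prop).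
Hypothesis v_incomparable :
  forall i j, I i -> I j -> i <> j -> prefix_incomparable (v i) (v j).

Definition glue (t : Q) (x : Cantor) : Prop :=
  exists i p, I i /\ F i t p /\ x = prepend (v i) p.

Lemma glue_open : (forall i t, I i -> open_set (F i t)) -> forall t, open_set (glue t).
Proof.
  intros HF t x (i & p & Hi & Hp & ->). destruct (HF i t Hi p Hp) as [n Hn].
  exists (n + length (v i)). intros y Hy. exists i, (shift (v i) y). split; [exact Hi|split].
  - apply Hn. intros k Hk. unfold shift. rewrite Hy by lia. rewrite prepend_ge by lia. f_equal. lia.
  - symmetry. apply prepend_shift. intros k Hk. rewrite Hy by lia. apply prepend_lt, Hk.
Qed.

Lemma glue_at i p t : I i -> (glue t (prepend (v i) p) <-> F i t p).
Proof.
  intro Hi. split; [|intro Hp; exists i, p; auto].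
  intros (j & q & Hj & Hq & He). destruct (Nat.eq_dec i j) as [<-|Hij].
  - rewrite <- (shift_prepend (v i) p), He, shift_prepend. exact Hq.
  - exfalso. exact (prepend_incomparable (v_incomparable Hi Hj Hij) He).
Qed.

End Glue.

Lemma Dclass_of_Dgen Q (R : Q -> Q -> Prop) (G : (Cantor -> Prop) -> Prop) D :
  well_order R ->
  (forall E, G E -> exists F : Q -> Cantor -> Prop,
     (forall t, open_set (F t)) /\ forall p, E p <-> in_diff R F p) ->
  Dgen G D -> Dclass R D.
Proof.
  intros HR HG (I & v & U & HU & Hinc & HD).
  assert (Hchoice : forall i, exists F : Q -> Cantor -> Prop, I i ->
    (forall t, open_set (F t)) /\ forall p, U i p <-> in_diff R F p).
  { intro i. destruct (classic (I i)) as [Hi|Hi].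
    - destruct (HG _ (HU i Hi)) as [F HF]. exists F. auto.
    - exists (fun _ _ => False). contradiction. }
  destruct (choice _ Hchoice) as [F HF].
  assert (Hglue : forall i p, I i ->
    (in_diff R (glue I v F) (prepend (v i) p) <-> U i p)).
  { intros i p Hi. rewrite (proj2 (HF i Hi)).
    apply in_diff_ext; [exact HR|]. intro t. apply glue_at; assumption. }
  exists (glue I v F). split.
  - apply glue_open. intros i t Hi. apply (proj1 (HF i Hi)).
  - intro x. change (D x <-> in_diff R (glue I v F) x). rewrite HD. split.
    + intros (i & p & Hi & Hp & Hx).
      replace x with (prepend (v i) p) by (extensionality n; symmetry; apply Hx).
      apply Hglue; assumption.
    + intro Hx. destruct (in_diff_covered Hx) as (t & i & p & Hi & _ & ->).
      exists i, p. split; [exact Hi|]. split; [apply Hglue; assumption | reflexivity].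
Qed.

Fixpoint word_to_pos (w : list bool) : positive :=
  match w with
  | [] => xH
  | true :: w => xI (word_to_pos w)
  | false :: w => xO (word_to_pos w)
  end.

Fixpoint pos_to_word (p : positive) : list bool :=
  match p with
  | xH => []
  | xI p => true :: pos_to_word p
  | xO p => false :: pos_to_word p
  end.

Lemma pos_to_wordK w : pos_to_word (word_to_pos w) = w.
Proof. induction w as [|[|] w IH]; simpl; congruence. Qed.

Lemma word_to_posK p : word_to_pos (pos_to_word p) = p.
Proof. induction p; simpl; congruence. Qed.

Definition word_of_nat (n : nat) : list bool := pos_to_word (Pos.of_succ_nat n).

Lemma word_of_nat_surjective w : exists n, word_of_nat n = w.
Proof.
  exists (Nat.pred (Pos.to_nat (word_to_pos w))). unfold word_of_nat.
  rewrite (SuccNat2Pos.inv _ (word_to_pos w)); [apply pos_to_wordK|].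
  pose proof (Pos2Nat.is_pos (word_to_pos w)). lia.
Qed.

Lemma word_of_nat_injective i j : word_of_nat i = word_of_nat j -> i = j.
Proof.
  unfold word_of_nat. intro H. apply (f_equal word_to_pos) in H. rewrite !word_to_posK in H.
  rewrite <- (SuccNat2Pos.pred_id i), <- (SuccNat2Pos.pred_id j), H. reflexivity.
Qed.

Definition prefix (x : Cantor) (k : nat) : list bool := map x (seq 0 k).

Lemma prefix_length x k : length (prefix x k) = k.
Proof. unfold prefix. rewrite length_map, length_seq. reflexivity. Qed.

Lemma prefix_nth x k n : n < k -> nth n (prefix x k) false = x n.
Proof.
  intro Hn. unfold prefix.
  rewrite nth_indep with (d' := x 0) by (rewrite length_map, length_seq; exact Hn).
  rewrite map_nth, seq_nth by exact Hn. reflexivity.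
Qed.

Lemma prepend_prefix x k : prepend (prefix x k) (shift (prefix x k) x) = x.
Proof.
  apply prepend_shift. intros n Hn. rewrite prefix_length in Hn. rewrite prefix_nth; auto.
Qed.

Lemma is_prefix_prefix {x k w} :
  is_prefix w (prefix x k) -> length w <= k /\ w = prefix x (length w).
Proof.
  intros [u Hu].
  assert (Hlen : length w <= k) by (rewrite <- (prefix_length x k), Hu, length_app; lia).
  split; [exact Hlen|]. apply nth_ext with false false; [rewrite prefix_length; reflexivity|].
  intros n Hn. rewrite prefix_nth by exact Hn.
  rewrite <- (prefix_nth x (k := k)) by lia. rewrite Hu, app_nth1 by exact Hn. reflexivity.
Qed.

Lemma well_order_nat : well_order Nat.lt.
Proof.
  exact (conj Nat.lt_irrefl (conj Nat.lt_trans (conj Nat.lt_total Nat.lt_wf_0))).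
Qed.

Definition minimal_word (S : list bool -> Prop) (w : list bool) : Prop :=
  S w /\ forall u, is_prefix u w -> u <> w -> ~ S u.

(* The minimal words of S index pairwise disjoint cones covering D. *)
Lemma Dgen_of_cones (S : list bool -> Prop) (G : (Cantor -> Prop) -> Prop) D :
  (forall x, D x -> exists k, S (prefix x k)) ->
  (forall w, S w -> G (fun p => D (prepend w p))) -> Dgen G D.
Proof.
  intros Hcover HG.
  exists (fun i => minimal_word S (word_of_nat i)), word_of_nat,
    (fun i p => D (prepend (word_of_nat i) p)).
  split; [|split].
  - intros i [HS _]. apply HG, HS.
  - intros i j [Si Mi] [Sj Mj] Hij.
    assert (Hne : word_of_nat i <> word_of_nat j) by (intro H; apply Hij, word_of_nat_injective, H).
    split; intro Hp; [apply (Mj _ Hp Hne Si) | apply (Mi _ Hp (not_eq_sym Hne) Sj)].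
  - intro x. split.
    + intro Hx.
      destruct (wo_minimal well_order_nat (fun k => S (prefix x k)) (Hcover x Hx))
        as (k & Hk & Hmin).
      destruct (word_of_nat_surjective (prefix x k)) as [i Hi].
      exists i, (shift (prefix x k) x). rewrite Hi, prepend_prefix.
      split; [|split; [exact Hx | reflexivity]]. split; [exact Hk|].
      intros u Hu Hne HSu. destruct (is_prefix_prefix Hu) as [Hlen Hu'].
      apply (Hmin (length u)); [rewrite <- Hu'; exact HSu|].
      assert (length u <> k) by (intro E; apply Hne; rewrite Hu', E; reflexivity). lia.
    + intros (i & p & _ & Hp & Hx).
      replace x with (prepend (word_of_nat i) p) by (extensionality n; symmetry; apply Hx).
      exact Hp.
Qed.

Lemma Dgen_of_Dclass Q (R : Q -> Q -> Prop) (G : (Cantor -> Prop) -> Prop) D :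
  (forall (U : Q -> Cantor -> Prop) b w, (forall t, open_set (U t)) ->
     (forall p, U b (prepend w p)) -> G (fun p => ~ in_diff R U (prepend w p))) ->
  Dclass R D -> Dgen (coclass G) D.
Proof.
  intros HG (U & HU & HD). change (forall x, D x <-> in_diff R U x) in HD.
  apply (Dgen_of_cones (fun w => exists b, forall p, U b (prepend w p))).
  - intros x Hx. destruct (in_diff_covered (proj1 (HD x) Hx)) as [b Hb].
    destruct (HU b x Hb) as [k Hk]. exists k, b. intro p. apply Hk. intros n Hn.
    rewrite prepend_lt by (rewrite prefix_length; exact Hn). apply prefix_nth, Hn.
  - intros w [b Hb]. exists (fun p => ~ in_diff R U (prepend w p)).
    split; [exact (HG U b w HU Hb)|]. intro p. rewrite HD. split; [tauto | apply NNPP].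
Qed.

Lemma open_set_full : open_set (fun _ => True).
Proof. intros x _. exists 0. auto. Qed.

(* Both families have the same infimum; the parity of the top flips from alpha to alpha + 1. *)
Lemma in_diff_ltopt T (lt : T -> T -> Prop) (U : option T -> Cantor -> Prop) V x p :
  well_order lt ->
  (forall t, U (Some t) x <-> V t p) -> (~ (exists t, V t p) -> U None x) ->
  (in_diff (ltopt lt) U x <-> ~ in_diff lt V p).
Proof.
  intros HW HUV Htop. destruct (is_inf_exists HW V p) as [m Hm].
  assert (HmU : is_inf (ltopt lt) U x (Some m)).
  { destruct m as [t|]; simpl in Hm |- *.
    - destruct Hm as [Ht Hmin]. split; [apply HUV, Ht|].
      intros [c|] Hc; simpl; [apply Hmin, HUV, Hc | tauto].
    - split; [apply Htop; intros [t Ht]; exact (Hm t Ht)|].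
      intros [c|] Hc; simpl; [exfalso; exact (Hm c (proj1 (HUV c) Hc)) | tauto]. }
  rewrite (in_diff_inf (well_order_ltopt HW) HmU), (in_diff_inf HW Hm).
  rewrite <- par_even_Some, (par_even_ltopt_top HW).
  destruct (classic (par_even (ltopt lt) m)), (classic (par_even (ltopt lt) None)); tauto.
Qed.

Lemma Dclass_succ_iff T (lt : T -> T -> Prop) D : well_order lt ->
  (Dclass (ltopt lt) D <-> Dgen (coclass (Dclass lt)) D).
Proof.
  intro HW. split.
  - apply Dgen_of_Dclass. intros U b w HU Hb.
    exists (fun t p => U (Some t) (prepend w p)). split; [intro t; apply open_prepend, HU|].
    intro p. change (~ in_diff (ltopt lt) U (prepend w p) <->
                     in_diff lt (fun t p => U (Some t) (prepend w p)) p).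
    rewrite (in_diff_ltopt U (fun t p => U (Some t) (prepend w p)) (prepend w p) p HW);
      [tauto|reflexivity|].
    intro Hnone. destruct b as [t|]; [exfalso; apply Hnone; exists t|]; apply Hb.
  - apply Dclass_of_Dgen; [apply well_order_ltopt, HW|].
    intros E (S & (V & HV & HS) & HE).
    exists (fun o p => match o with Some t => V t p | None => True end). split.
    + intros [t|]; [apply HV | apply open_set_full].
    + intro p. rewrite HE, HS, (in_diff_ltopt _ V p p HW); [reflexivity..|]. auto.
Qed.

Definition seg_close T (lt : T -> T -> Prop) l (m : option (seg lt l)) : T :=
  match m with Some s => proj1_sig s | None => l end.

Section Segments.
Variables (T : Type) (lt : T -> T -> Prop).
Hypothesis HW : well_order lt.
Notation par := (par_even (ltopt lt)).

Lemma par_even_succ a c : immpred lt a c -> (par (Some c) <-> ~ par (Some a)).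
Proof.
  intro Hac. exact (par_even_immpred (well_order_ltopt HW) (proj1 (immpred_Some lt a c) Hac)).
Qed.

(* A maximal element a of T is followed by alpha itself, of the other parity. *)
Lemma immpred_exists_par_top a : (par (Some a) <-> par None) -> exists c, immpred lt a c.
Proof.
  intro Hpar. destruct (classic (exists b, lt a b)) as [[b Hab]|Hmax].
  - exact (immpred_exists HW Hab).
  - exfalso. assert (Htop : immpred (ltopt lt) (Some a) None).
    { split; [exact I|]. intros ([c|] & Hac & Hc); [apply Hmax; exists c; exact Hac | exact Hc]. }
    pose proof (par_even_immpred (well_order_ltopt HW) Htop). tauto.
Qed.

Lemma exists_par_other_above b : exists l, ~ lt l b /\ ~ (par (Some l) <-> par None).
Proof.
  destruct (classic (par (Some b) <-> par None)) as [Hb|Hb].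
  - destruct (immpred_exists_par_top Hb) as [l Hl]. exists l. split.
    + intro Hlb. apply (wo_irrefl HW b). exact (wo_trans HW (proj1 Hl) Hlb).
    + rewrite (par_even_succ Hl). tauto.
  - exists b. split; [apply wo_irrefl, HW | exact Hb].
Qed.

Lemma par_even_seg_close l m :
  par_even (ltopt (@seglt T lt l)) m <-> par (Some (seg_close m)).
Proof.
  apply (par_even_embed (ltopt (@seglt T lt l)) (ltopt lt) (fun m => Some (seg_close m))).
  - intros [[a Ha]|] [[b Hb]|]; unfold seglt; simpl; try tauto.
    + split; [contradiction | intro Hlb; exact (wo_irrefl HW b (wo_trans HW Hb Hlb))].
    + split; [contradiction | apply wo_irrefl, HW].
  - intros [q|] [[b Hb]|] Hq; simpl in Hq; try contradiction.
    + exists (Some (exist _ q (wo_trans HW Hq Hb))). reflexivity.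
    + exists (Some (exist _ q Hq)). reflexivity.
Qed.

Lemma is_inf_seg {U : T -> Cantor -> Prop} {l} {V : seg lt l -> Cantor -> Prop} {x p t} :
  is_inf lt U x (Some t) -> ~ lt l t -> (forall s, V s p <-> U (proj1_sig s) x) ->
  exists m, is_inf (@seglt T lt l) V p m /\ seg_close m = t.
Proof.
  intros [Ht Hmin] Hlt HV. destruct (wo_total HW t l) as [Htl|[<-|Hlt']]; [| |contradiction].
  - exists (Some (exist _ t Htl)). split; [|reflexivity]. simpl. split.
    + apply HV, Ht.
    + intros c Hc. apply Hmin, HV, Hc.
  - exists None. split; [|reflexivity]. intros c Hc. exact (Hmin _ (proj1 (HV c) Hc) (proj2_sig c)).
Qed.

Lemma in_diff_seg (U : T -> Cantor -> Prop) l (V : seg lt l -> Cantor -> Prop) x p b :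
  ~ (par (Some l) <-> par None) -> ~ lt l b -> U b x ->
  (forall s, V s p <-> U (proj1_sig s) x) ->
  (in_diff lt U x <-> ~ in_diff (@seglt T lt l) V p).
Proof.
  intros Hl Hlb Hb HV. destruct (is_inf_exists HW U x) as [[t|] Ht]; [|exfalso; exact (Ht b Hb)].
  assert (Hlt : ~ lt l t).
  { intro Hlt. destruct (wo_total HW t b) as [Htb|[<-|Hbt]].
    - exact (Hlb (wo_trans HW Hlt Htb)).
    - exact (Hlb Hlt).
    - exact (proj2 Ht b Hb Hbt). }
  destruct (is_inf_seg Ht Hlt HV) as (m & Hm & Hmt).
  rewrite (in_diff_inf HW Ht), (in_diff_inf (well_order_seglt l HW) Hm).
  rewrite !par_even_seg_close, Hmt. simpl seg_close.
  destruct (classic (par (Some t))), (classic (par (Some l))), (classic (par None)); tauto.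
Qed.

Definition seg_lift l (V : seg lt l -> Cantor -> Prop) (t : T) (p : Cantor) : Prop :=
  (exists s, proj1_sig s = t /\ V s p) \/ t = l.

Lemma open_seg_lift l V : (forall s, open_set (V s)) -> forall t, open_set (@seg_lift l V t).
Proof.
  intros HV t p [(s & Hst & Hs)|Htl].
  - destruct (HV s p Hs) as [n Hn]. exists n. intros y Hy. left. exists s. auto.
  - exists 0. intros y _. right. exact Htl.
Qed.

Lemma is_inf_seg_lift {l V p m} :
  is_inf (@seglt T lt l) V p m -> is_inf lt (@seg_lift l V) p (Some (seg_close m)).
Proof.
  destruct m as [s|]; simpl; intro Hm; split.
  - left. exists s. split; [reflexivity | apply Hm].
  - intros c [(s' & <- & Hs')| ->].
    + exact (proj2 Hm s' Hs').
    + intro Hls. exact (wo_irrefl HW l (wo_trans HW Hls (proj2_sig s))).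
  - right. reflexivity.
  - intros c [(s' & _ & Hs')| ->]; [exfalso; exact (Hm s' Hs') | apply wo_irrefl, HW].
Qed.

Definition succ_shift (F : T -> Cantor -> Prop) (t : T) (p : Cantor) : Prop :=
  exists a, immpred lt a t /\ F a p.

Lemma open_succ_shift F : (forall t, open_set (F t)) -> forall t, open_set (succ_shift F t).
Proof.
  intros HF t p (a & Hat & Ha). destruct (HF a p Ha) as [n Hn].
  exists n. intros y Hy. exists a. auto.
Qed.

Lemma is_inf_succ_shift {F p a t} :
  is_inf lt F p (Some a) -> immpred lt a t -> is_inf lt (succ_shift F) p (Some t).
Proof.
  intros [Ha Hmin] Hat. split; [exists a; auto|].
  intros c (d & Hdc & Hd). exact (immpred_monotone HW Hat Hdc (Hmin d Hd)).
Qed.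

(* If lambda and alpha have different parities, a D_lambda set is the D_alpha set of the same
   family completed by the whole space at lambda; otherwise shift everything up by one. *)
Lemma complement_seg_in_diff l (V : seg lt l -> Cantor -> Prop) :
  (forall s, open_set (V s)) ->
  exists F : T -> Cantor -> Prop,
    (forall t, open_set (F t)) /\ forall p, ~ in_diff (@seglt T lt l) V p <-> in_diff lt F p.
Proof.
  intro HV. pose proof (well_order_seglt l HW) as HWl.
  destruct (classic (par (Some l) <-> par None)) as [Hl|Hl].
  - destruct (immpred_exists_par_top Hl) as [l' Hl'].
    exists (succ_shift (seg_lift V)). split; [apply open_succ_shift, open_seg_lift, HV|].
    intro p. destruct (is_inf_exists HWl V p) as [m Hm].
    assert (Hsucc : exists t, immpred lt (seg_close m) t).
    { destruct m as [s|]; [exact (immpred_exists HW (proj2_sig s)) | exists l'; exact Hl']. }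
    destruct Hsucc as [t Ht].
    rewrite (in_diff_inf HWl Hm), (in_diff_inf HW (is_inf_succ_shift (is_inf_seg_lift Hm) Ht)).
    rewrite !par_even_seg_close, (par_even_succ Ht). simpl seg_close.
    destruct (classic (par (Some (seg_close m)))), (classic (par (Some l))); tauto.
  - exists (seg_lift V). split; [apply open_seg_lift, HV|].
    intro p. destruct (is_inf_exists HWl V p) as [m Hm].
    rewrite (in_diff_inf HWl Hm), (in_diff_inf HW (is_inf_seg_lift Hm)).
    rewrite !par_even_seg_close. simpl seg_close.
    destruct (classic (par (Some (seg_close m)))), (classic (par (Some l))),
      (classic (par None)); tauto.
Qed.

End Segments.

Lemma Dclass_iff_Dgen_seg T (lt : T -> T -> Prop) D : well_order lt ->
  (Dclass lt D <-> Dgen (coclass (fun S => exists l : T, Dclass (@seglt T lt l) S)) D).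
Proof.
  intro HW. split.
  - apply Dgen_of_Dclass. intros U b w HU Hb.
    destruct (exists_par_other_above HW b) as (l & Hlb & Hl).
    exists l, (fun s p => U (proj1_sig s) (prepend w p)).
    split; [intro s; apply open_prepend, HU|]. intro p.
    change (~ in_diff lt U (prepend w p) <->
            in_diff (@seglt T lt l) (fun s p => U (proj1_sig s) (prepend w p)) p).
    rewrite (in_diff_seg HW U (fun s p => U (proj1_sig s) (prepend w p))
               (prepend w p) p b Hl Hlb (Hb p)); [tauto | reflexivity].
  - apply (Dclass_of_Dgen HW). intros E (S & (l & V & HV & HS) & HE).
    destruct (complement_seg_in_diff HW V HV) as (F & HF & HVF).
    exists F. split; [exact HF|]. intro p. rewrite HE, HS. apply HVF.
Qed.

Theorem lemma6 (T : Type) (lt : T -> T -> Prop) (Hwo : countable_wellorder lt) :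
  (forall D : Cantor -> Prop,
     Dclass (ltopt lt) D <-> Dgen (coclass (Dclass lt)) D) /\
  ((exists t : T, True) ->
   forall D : Cantor -> Prop,
     Dclass lt D <->
     Dgen (coclass (fun S => exists l : T, Dclass (@seglt T lt l) S)) D).
Proof.
  pose proof (well_order_of_countable Hwo) as HW. split.
  - intro D. exact (Dclass_succ_iff D HW).
  (* For alpha = 0 both sides are {emptyset}. *)
  - intros _ D. exact (Dclass_iff_Dgen_seg D HW).
Qed.
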